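(* Let $D_{C_3}$ be a weighted oriented graph whose underlying graph is the $3$-cycle $C_3$. Then $I(D_{C_3})$ is Cohen-Macaulay if and only if there exists a vertex $x$ of $D_{C_3}$ with $w(x)=1$.
   Context: A weighted oriented graph $D$ with underlying simple graph on vertices $x_1,\ldots,x_n$ is an orientation of its edges with a weight function $w:V\to\mathbb{Z}_{>0}$; an edge oriented from $x_i$ to $x_j$ is written $(x_i,x_j)$. By convention, a source (a vertex all of whose edges are oriented away from it) is assigned weight $1$. The edge ideal is $I(D)=\langle x_ix_j^{w(x_j)}:(x_i,x_j)\in E(D)\rangle\subseteq A=K[x_1,\ldots,x_n]$, $K$ a field; $I(D)$ is Cohen-Macaulay if $A/I(D)$ is Cohen-Macaulay. *)

From HB Require Import structures.
From mathcomp Require Import all_boot all_order all_algebra.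
From mathcomp Require Import mpoly.
Set Implicit Arguments. Unset Strict Implicit. Unset Printing Implicit Defensive.
Import GRing.Theory.
Local Open Scope ring_scope.

Definition ideal_plus (K : fieldType) (n : nat) (I : {mpoly K[n]} -> Prop)
    (f : nat -> {mpoly K[n]}) (k : nat) (p : {mpoly K[n]}) : Prop :=
  exists (q : {mpoly K[n]}) (c : nat -> {mpoly K[n]}),
    I q /\ p = q + \sum_(i < k) c i * f i.

(* the irrelevant maximal ideal m = (x_0, ..., x_{n-1}): zero constant term *)
Definition in_irrelevant (K : fieldType) (n : nat) (p : {mpoly K[n]}) : Prop :=
  p@_0%MM = 0.

Definition regular_seq (K : fieldType) (n : nat) (I : {mpoly K[n]} -> Prop)
    (f : nat -> {mpoly K[n]}) (k : nat) : Prop :=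
  (forall i, (i < k)%N -> in_irrelevant (f i)) /\
  (forall i, (i < k)%N -> forall g : {mpoly K[n]},
      ideal_plus I f i (g * f i) -> ideal_plus I f i g) /\
  ~ ideal_plus I f k 1.

Definition depth_ge (K : fieldType) (n : nat) (I : {mpoly K[n]} -> Prop)
    (k : nat) : Prop :=
  exists f : nat -> {mpoly K[n]}, regular_seq I f k.

Definition is_prime_ideal (K : fieldType) (n : nat) (P : {mpoly K[n]} -> Prop)
  : Prop :=
  P 0 /\ (forall a b, P a -> P b -> P (a + b)) /\
  (forall a b, P b -> P (a * b)) /\ ~ P 1 /\
  (forall a b, P (a * b) -> P a \/ P b).

Definition dim_ge (K : fieldType) (n : nat) (I : {mpoly K[n]} -> Prop)
    (k : nat) : Prop :=
  exists P : nat -> {mpoly K[n]} -> Prop,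
    (forall i, (i <= k)%N -> is_prime_ideal (P i)) /\
    (forall p, I p -> P 0%N p) /\
    (forall i, (i < k)%N ->
       (forall p, P i p -> P i.+1 p) /\ exists p, P i.+1 p /\ ~ P i p).

(* A/I is Cohen-Macaulay: depth (w.r.t. the irrelevant ideal) = Krull dim *)
Definition cohen_macaulay (K : fieldType) (n : nat) (I : {mpoly K[n]} -> Prop)
  : Prop :=
  exists k : nat, depth_ge I k /\ ~ depth_ge I k.+1 /\
                  dim_ge I k /\ ~ dim_ge I k.+1.

(* E i j means the edge {x_i,x_j} is oriented as (x_i, x_j).  The underlying
   graph is C_3 on vertices 'I_3: every pair of distinct vertices is joined by
   exactly one oriented edge, no loops. *)
Definition orientation_C3 (E : rel 'I_3) : Prop :=
  (forall i, ~~ E i i) /\ (forall i j, i != j -> E i j = ~~ E j i).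

Definition is_source (E : rel 'I_3) (i : 'I_3) : Prop :=
  forall j, j != i -> E i j.

Definition weight_ok (E : rel 'I_3) (w : 'I_3 -> nat) : Prop :=
  (forall i, (0 < w i)%N) /\ (forall i, is_source E i -> w i = 1%N).

Definition edge_ideal (K : fieldType) (E : rel 'I_3) (w : 'I_3 -> nat)
    (p : {mpoly K[3]}) : Prop :=
  exists c : 'I_3 -> 'I_3 -> {mpoly K[3]},
    p = \sum_(i < 3) \sum_(j < 3 | E i j) c i j * ('X_i * 'X_j ^+ w j).

From HB Require Import structures.
From mathcomp Require Import all_boot all_order all_algebra.
From mathcomp Require Import mpoly.
From mathcomp Require Import ring zify.
From Stdlib Require Import FunctionalExtensionality PropExtensionality.
Set Implicit Arguments. Unset Strict Implicit. Unset Printing Implicit Defensive.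
Import GRing.Theory.
Local Open Scope ring_scope.

(* If no vertex has weight 1, no vertex is a source, so every vertex [x_i] has an
   in-neighbour of weight at least 2; with [mu = w - 1], every [x_i x^mu] lies in
   I(D) but [x^mu] does not. Hence the irrelevant ideal consists of zero divisors
   modulo I(D), and depth A/I(D) = 0 < 1 <= dim A/I(D).
   If some vertex has weight 1, then up to renaming the vertices
   I(D) = (x_s x_m^P, x_s x_t^R, x_m x_t^Q) with R <= Q. Every prime over this
   ideal contains two of the three variables, so dim A/I(D) = 1, and the form
   x_s + x_m + x_t is a nonzerodivisor modulo I(D). Finally (x_s, x_m) x_t^Q lies
   in I(D): if f0 is regular and f0 = x_t G(x_t) modulo (x_s, x_m), the element
   x_t^Q G(x_t) is killed by the irrelevant ideal modulo I(D) + (f0) without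
   lying in it, so depth A/I(D) = 1. *)

(** * Ideals given by predicates *)

(* Membership in the ideals of the statement (edge ideals, sums of ideals) is
   not decidable, so ideals are predicates [R -> Prop] rather than MathComp's
   decidable [idealr]. *)
Section Ideals.
Variable R : comNzRingType.
Implicit Types (I P : R -> Prop) (a b p : R).

Record ideal I : Prop := Ideal {
  ideal0 : I 0;
  idealD : forall a b, I a -> I b -> I (a + b);
  idealMl : forall a b, I b -> I (a * b) }.

Record prime_ideal P : Prop := PrimeIdeal {
  prime_ideal_ideal :> ideal P;
  prime_ideal_proper : ~ P 1;
  prime_idealM : forall a b, P (a * b) -> P a \/ P b }.

Lemma idealMr I a b : ideal I -> I a -> I (a * b).
Proof. by move=> hI Ia; rewrite mulrC; apply: idealMl. Qed.

Lemma idealN I a : ideal I -> I a -> I (- a).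
Proof. by move=> hI Ia; rewrite -mulN1r; apply: idealMl. Qed.

Lemma idealB I a b : ideal I -> I a -> I b -> I (a - b).
Proof. by move=> hI Ia Ib; apply: idealD => //; apply: idealN. Qed.

Lemma ideal_sum I (T : Type) (r : seq T) (Pr : pred T) (F : T -> R) :
  ideal I -> (forall x, Pr x -> I (F x)) -> I (\sum_(x <- r | Pr x) F x).
Proof. by move=> hI hF; apply: big_ind => //; [apply: ideal0 | apply: idealD]. Qed.

Lemma ideal_colon I y : ideal I -> ideal (fun p => I (y * p)).
Proof.
move=> hI; split=> [|a b Ia Ib|a b Ib]; first by rewrite mulr0; apply: ideal0.
  by rewrite mulrDr; apply: idealD.
by rewrite mulrCA; apply: idealMl.
Qed.

Lemma prime_ideal_pow P a k : prime_ideal P -> P (a ^+ k) -> P a.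
Proof.
case=> _ P1 Pprime; elim: k => [|k IHk]; first by rewrite expr0.
by rewrite exprS => /Pprime [].
Qed.

Definition gen_ideal (gs : seq R) p : Prop :=
  exists c : nat -> R, p = \sum_(i < size gs) c i * gs`_i.

Lemma gen_ideal_ideal gs : ideal (gen_ideal gs).
Proof.
split=> [|a b [ca ->] [cb ->]|a b [c ->]].
- by exists (fun _ => 0); rewrite big1 // => i _; rewrite mul0r.
- by exists (fun i => ca i + cb i); rewrite -big_split; apply: eq_bigr => i _; rewrite mulrDl.
- by exists (fun i => a * c i); rewrite mulr_sumr; apply: eq_bigr => i _; rewrite mulrA.
Qed.

Lemma gen_ideal_mem gs g : g \in gs -> gen_ideal gs g.
Proof.
move=> gs_g; exists (fun i => (i == index g gs)%:R).
have gs_i : (index g gs < size gs)%N by rewrite index_mem.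
rewrite (bigD1 (Ordinal gs_i)) //= eqxx mul1r nth_index //.
by rewrite big1 ?addr0 // => i /negbTE; rewrite -val_eqE /= => ->; rewrite mul0r.
Qed.

Lemma gen_ideal_min gs I : ideal I -> (forall g, g \in gs -> I g) ->
  forall p, gen_ideal gs p -> I p.
Proof.
move=> hI hgs p [c ->]; apply: ideal_sum => // i _.
by apply: idealMl => //; apply/hgs/mem_nth.
Qed.

Lemma gen_ideal1P a p : gen_ideal [:: a] p <-> exists u, p = u * a.
Proof.
split=> [[c ->]|[u ->]]; first by exists (c 0%N); rewrite big_ord1.
by apply: idealMl; [apply: gen_ideal_ideal | apply: gen_ideal_mem; rewrite mem_seq1].
Qed.

Lemma gen_ideal2P a b p : gen_ideal [:: a; b] p <-> exists u v, p = u * a + v * b.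
Proof.
split=> [[c ->]|[u [v ->]]].
  by exists (c 0%N), (c 1%N); rewrite !big_ord_recr big_ord0 /= add0r.
by exists (nth 0 [:: u; v]); rewrite !big_ord_recr big_ord0 /= add0r.
Qed.

Lemma gen_ideal3P a b c p :
  gen_ideal [:: a; b; c] p <-> exists u v w, p = u * a + v * b + w * c.
Proof.
split=> [[e ->]|[u [v [w ->]]]].
  by exists (e 0%N), (e 1%N), (e 2%N); rewrite !big_ord_recr big_ord0 /= add0r.
by exists (nth 0 [:: u; v; w]); rewrite !big_ord_recr big_ord0 /= add0r.
Qed.

End Ideals.

Lemma ideal_comap (R S : comNzRingType) (f : {rmorphism R -> S}) (J : S -> Prop) :
  ideal J -> ideal (fun p => J (f p)).
Proof.
move=> hJ; split=> [|a b Ia Ib|a b Ib]; rewrite ?rmorph0 ?rmorphD ?rmorphM.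
- exact: ideal0.
- exact: idealD.
- exact: idealMl.
Qed.

Lemma prime_ideal_comap (R S : comNzRingType) (f : {rmorphism R -> S}) (Q : S -> Prop) :
  prime_ideal Q -> prime_ideal (fun p => Q (f p)).
Proof.
case=> hQ Q1 Qprime; split; first exact: ideal_comap.
  by rewrite rmorph1.
by move=> a b; rewrite rmorphM; apply: Qprime.
Qed.

Lemma prime_ideal_kernel (R : comNzRingType) (S : idomainType) (f : {rmorphism R -> S}) :
  prime_ideal (fun p => f p = 0).
Proof.
apply: (prime_ideal_comap f (Q := fun x : S => x = 0)); split.
- by split=> // [a b -> ->|a b ->]; rewrite ?addr0 ?mulr0.
- by apply/eqP; rewrite oner_eq0.
- by move=> a b /eqP; rewrite mulf_eq0 => /orP[] /eqP; [left | right].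
Qed.

(** * Substitutions in multivariate polynomials *)

Section MPolyRing.
Variables (n : nat) (R : idomainType).
Local Notation A := {mpoly R[n]}.
Implicit Types (p q : A) (i j c : 'I_n).

Lemma mpoly_ring_ind (P : A -> Prop) :
  (forall a, P a%:MP) -> (forall i, P 'X_i) ->
  (forall p q, P p -> P q -> P (p + q)) -> (forall p q, P p -> P q -> P (p * q)) ->
  forall p, P p.
Proof.
move=> PC PX PD PM; elim/mpolyind => [|a m p _ _ Pp]; first by rewrite -mpolyC0; apply: (PC).
apply: (PD) => //; rewrite -mul_mpolyC mpolyXE_id; apply: (PM) => //.
apply: big_ind => [||i _]; [by rewrite -mpolyC1 | exact: (PM) |].
by elim: (m i) => [|k IHk]; rewrite ?expr0 -?mpolyC1 // exprS; apply: (PM).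
Qed.

Lemma mpoly_rmorph_ext (S : nzRingType) (f g : {rmorphism A -> S}) :
  (forall a, f a%:MP = g a%:MP) -> (forall i, f 'X_i = g 'X_i) -> f =1 g.
Proof.
move=> fgC fgX; apply: mpoly_ring_ind => // [p q fg_p fg_q|p q fg_p fg_q].
  by rewrite !rmorphD fg_p fg_q.
by rewrite !rmorphM fg_p fg_q.
Qed.

Lemma rmorph_sub_mem (f : {rmorphism A -> A}) (I : A -> Prop) :
  ideal I -> (forall a, f a%:MP = a%:MP) -> (forall i, I ('X_i - f 'X_i)) ->
  forall p, I (p - f p).
Proof.
move=> hI fC fX; apply: mpoly_ring_ind => [a|//|p q Ip Iq|p q Ip Iq].
- by rewrite fC subrr; apply: ideal0.
- by rewrite rmorphD opprD addrACA; apply: idealD.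
- have -> : p * q - f (p * q) = (p - f p) * q + f p * (q - f q) by rewrite rmorphM; ring.
  by apply: idealD => //; [apply: idealMr | apply: idealMl].
Qed.

Lemma mpolyX_neq0 i : 'X_i != 0 :> A.
Proof.
apply/eqP => /(congr1 (mcoeff U_(i))).
by rewrite mcoeffX eqxx mcoeff0 => /eqP; rewrite oner_eq0.
Qed.

Lemma mcoeff0X i : ('X_i : A)@_0 = 0.
Proof. by rewrite mcoeffX; case: eqP => // /mnmP /(_ i); rewrite mnm1E eqxx mnm0E. Qed.

Definition msubst (h : 'I_n -> A) : {rmorphism A -> A} := mmap (@mpolyC n R) h.

Lemma msubstX h i : msubst h 'X_i = h i.
Proof. by rewrite /msubst /= mmapX mmap1U. Qed.

Lemma msubstC h a : msubst h a%:MP = a%:MP.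
Proof. by rewrite /msubst /= mmapC. Qed.

Lemma msubstK h h' : (forall i, msubst h' (h i) = 'X_i) -> cancel (msubst h) (msubst h').
Proof.
move=> hK p; have fC a : msubst h' (msubst h a%:MP) = a%:MP by rewrite !msubstC.
have fX i : msubst h' (msubst h 'X_i) = 'X_i by rewrite msubstX.
exact: (mpoly_rmorph_ext (f := msubst h' \o msubst h) (g := idfun) fC fX p).
Qed.

Definition msubst0 i : {rmorphism A -> A} := msubst (fun j => if j == i then 0 else 'X_j).

Lemma msubst0X i j : msubst0 i 'X_j = if j == i then 0 else 'X_j.
Proof. exact: msubstX. Qed.

Lemma msubst0C i a : msubst0 i a%:MP = a%:MP.
Proof. exact: msubstC. Qed.

Lemma msubst0_split i p : exists q, p = msubst0 i p + 'X_i * q.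
Proof.
have Xi_mem j : gen_ideal [:: 'X_i] ('X_j - msubst0 i 'X_j).
  rewrite msubst0X; case: eqP => [->|_]; rewrite ?subr0 ?subrr.
    by apply: gen_ideal_mem; rewrite mem_seq1.
  exact: ideal0 (gen_ideal_ideal _).
have /gen_ideal1P [q Hq] := rmorph_sub_mem (gen_ideal_ideal _) (msubst0C i) Xi_mem p.
by exists q; rewrite -[p in LHS](subrK (msubst0 i p)) Hq; ring.
Qed.

Lemma msubst0_eq0 i p : msubst0 i p = 0 -> exists q, p = 'X_i * q.
Proof. by have [q {2}->] := msubst0_split i p; move=> ->; exists q; rewrite add0r. Qed.

Lemma mpolyXn_dvd i j k (a b : A) : i != j ->
  ('X_i + 'X_j) * a = 'X_j ^+ k * b -> exists a', a = 'X_j ^+ k * a'.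
Proof.
move=> ij; elim: k a b => [|k IHk] a b; first by exists a; rewrite expr0 mul1r.
move=> eq_ab; have /eqP := congr1 (msubst0 j) eq_ab.
rewrite !rmorphM rmorphD rmorphXn !msubst0X eqxx (negbTE ij) addr0 expr0n mul0r.
rewrite mulf_eq0 (negbTE (mpolyX_neq0 i)) => /eqP /msubst0_eq0 [a1 a1E].
have /IHk [a' a1E'] : ('X_i + 'X_j) * a1 = 'X_j ^+ k * b.
  apply: (mulfI (mpolyX_neq0 j)); rewrite mulrCA -a1E eq_ab exprSr; ring.
by exists a'; rewrite a1E a1E' exprSr; ring.
Qed.

Lemma mcoeff_mulX_eq0 (a : A) (m m' : 'X_{1..n}) : ~~ (m <= m')%MM -> (a * 'X_[m])@_m' = 0.
Proof.
move=> mm'; apply: memN_msupp_eq0; apply: contra mm'.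
by rewrite (perm_mem (msuppMX a m)) => /mapP [k _ ->]; rewrite lem_addr.
Qed.

Lemma irrelevant_prime : prime_ideal (fun p : A => p@_0 = 0).
Proof. exact: (prime_ideal_kernel (mcoeff 0 : {rmorphism A -> R})). Qed.

Lemma irrelevant_min (I : A -> Prop) : ideal I -> (forall i, I 'X_i) ->
  forall p, p@_0 = 0 -> I p.
Proof.
move=> hI IX p p0; pose f : {rmorphism A -> A} := @mpolyC n R \o mcoeff 0.
have := rmorph_sub_mem hI (f := f) _ _ p; rewrite /= p0 subr0; apply=> [a|i] /=.
  by rewrite mcoeffC eqxx mulr1.
by rewrite mcoeff0X subr0.
Qed.

Definition mpoly_uni c : {rmorphism A -> {poly R}} :=
  mmap (@polyC R) (fun j => if j == c then 'X else 0).

Definition uni_mpoly c : {rmorphism {poly R} -> A} :=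
  horner_eval ('X_c : A) \o map_poly (@mpolyC n R).

Lemma mpoly_uniX c j : mpoly_uni c 'X_j = if j == c then 'X else 0.
Proof. by rewrite /mpoly_uni /= mmapX mmap1U. Qed.

Lemma mpoly_uniC c a : mpoly_uni c a%:MP = a%:P.
Proof. by rewrite /mpoly_uni /= mmapC. Qed.

Lemma uni_mpolyX c : uni_mpoly c 'X = 'X_c.
Proof. by rewrite /uni_mpoly /= map_polyX /horner_eval hornerX. Qed.

Lemma uni_mpolyC c a : uni_mpoly c a%:P = a%:MP.
Proof. by rewrite /uni_mpoly /= map_polyC /horner_eval hornerC. Qed.

Lemma uni_mpolyK c : cancel (uni_mpoly c) (mpoly_uni c).
Proof.
elim/poly_ind => [|u a IHu]; first by rewrite !rmorph0.
by rewrite !rmorphD !rmorphM (uni_mpolyX c) (uni_mpolyC c a) mpoly_uniX eqxx mpoly_uniC IHu.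
Qed.

Lemma mpoly_uni_horner0 c p : (mpoly_uni c p).[0] = p@_0.
Proof.
apply: (mpoly_rmorph_ext (f := horner_eval 0 \o mpoly_uni c) (g := mcoeff 0)) => [a|i].
  by rewrite /= /horner_eval mpoly_uniC hornerC mcoeffC eqxx mulr1.
by rewrite /= /horner_eval mpoly_uniX mcoeff0X; case: eqP; rewrite ?hornerX ?horner0.
Qed.

Lemma mpoly_uni_msubst0 i c p : i != c -> mpoly_uni c (msubst0 i p) = mpoly_uni c p.
Proof.
move=> ic; apply: (mpoly_rmorph_ext (f := mpoly_uni c \o msubst0 i)) => [a|j] /=.
  by rewrite msubst0C.
rewrite msubst0X; case: eqP => [->|//].
by rewrite rmorph0 mpoly_uniX (negbTE ic).
Qed.

Lemma uni_sub_mem c (I : A -> Prop) : ideal I -> (forall j, j != c -> I 'X_j) ->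
  forall p, I (p - uni_mpoly c (mpoly_uni c p)).
Proof.
move=> hI IX.
have fC a : uni_mpoly c (mpoly_uni c a%:MP) = a%:MP by rewrite mpoly_uniC uni_mpolyC.
have fX j : I ('X_j - uni_mpoly c (mpoly_uni c 'X_j)).
  rewrite mpoly_uniX; case: eqP => [->|/eqP jc]; last by rewrite rmorph0 subr0; apply: IX.
  by rewrite uni_mpolyX subrr; apply: ideal0.
exact: (rmorph_sub_mem (f := uni_mpoly c \o mpoly_uni c) hI fC fX).
Qed.

End MPolyRing.

Arguments msubst {n R}.
Arguments msubst0 {n R}.
Arguments mpoly_uni {n R}.
Arguments uni_mpoly {n R}.
Arguments mpolyX_neq0 {n R}.
Arguments mcoeff0X {n R}.
Arguments irrelevant_prime {n R}.
Arguments mpoly_uniX {n R}.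
Arguments mpoly_uniC {n R}.
Arguments uni_mpolyX {n R}.
Arguments uni_mpolyC {n R}.

(** * Krull dimension and depth *)

(* Induction on the degree of [g]: split [g] along [gcdp g s]; either a proper
   factor of [g] lies in [Q], or [g] and [s] are coprime and Bezout applies. *)
Lemma poly_prime_ideal_maximal (K : fieldType) (Q Q' : {poly K} -> Prop) g s :
  prime_ideal Q -> ideal Q' -> (forall p, Q p -> Q' p) ->
  Q g -> g != 0 -> Q' s -> ~ Q s -> Q' 1.
Proof.
case=> hQ _ Qprime hQ' QQ' Qg g0 Q's Qs.
elim: {g}(size g) {-2}g (leqnn (size g)) Qg g0 => [|k IHk] g.
  by rewrite leqn0 size_poly_eq0 => /eqP -> _; rewrite eqxx.
move=> g_k Qg g0; set d := gcdp g s; set e := g %/ d.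
have gE : g = e * d by rewrite divpK // dvdp_gcdl.
have e0 : e != 0 by apply: contraNneq g0 => e0; rewrite gE e0 mul0r.
have d0 : d != 0 by rewrite gcdp_eq0 negb_and g0.
have [Qe|Qd] : Q e \/ Q d by apply: Qprime; rewrite -gE.
  have [lt_eg|] := ltnP (size e) (size g).
    by apply: (IHk e) => //; rewrite -ltnS (leq_trans lt_eg).
  rewrite gE size_mul // => le_ge.
  have d1 : size d == 1%N.
    have se : (0 < size e)%N by rewrite size_poly_gt0.
    have sd : (0 < size d)%N by rewrite size_poly_gt0.
    by move: le_ge se sd; move: (size e) (size d) => x y; lia.
  have /Bezout_coprimepP [[u v]] /= := d1.
  move=> /eqp_size; rewrite size_poly1 => /eqP /size_poly1P [a a0 uv].
  have -> : 1 = (a^-1)%:P * (u * g + v * s) by rewrite uv -polyCM mulVf.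
  by apply: idealMl => //; apply: idealD => //; apply: idealMl => //; apply: QQ'.
by case: Qs; rewrite -(divpK (dvdp_gcdr g s)); apply: idealMl.
Qed.

Section KrullDimension.
Variables (K : fieldType) (n : nat).
Local Notation A := {mpoly K[n]}.
Implicit Types (I P : A -> Prop) (p : A).

Lemma is_prime_idealE P : is_prime_ideal P <-> prime_ideal P.
Proof.
by split=> [[P0 [PD [PM [P1 Pprime]]]] | [[P0 PD PM] P1 Pprime]].
Qed.

Lemma ideal_mem_uniE P c : ideal P -> (forall j, j != c -> P 'X_j) ->
  forall p, P p <-> P (uni_mpoly c (mpoly_uni c p)).
Proof.
move=> hP PX p; have Psub := uni_sub_mem hP PX p.
split=> Pp; first by rewrite -[X in P X](subKr p); apply: idealB.
by rewrite -[p](subrK (uni_mpoly c (mpoly_uni c p))); apply: idealD.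
Qed.

Lemma dim_ge1 I c : (forall p, I p -> mpoly_uni c p = 0) -> dim_ge I 1.
Proof.
move=> Iuni; pose P0 p := mpoly_uni c p = 0; pose P1 p := p@_0 = 0.
exists (fun i => if i == 0%N then P0 else P1); split=> [[|[|//]] _ /=|].
- exact/is_prime_idealE/prime_ideal_kernel.
- exact/is_prime_idealE/irrelevant_prime.
split=> // -[|//] _ /=; split=> [p P0p|].
  by rewrite /P1 -(mpoly_uni_horner0 c) P0p horner0.
exists 'X_c; rewrite /P0 /P1 mcoeff0X mpoly_uniX eqxx; split=> //.
by apply/eqP; rewrite polyX_eq0.
Qed.

(* A chain of primes over [I] lives in the principal ideal domain K[x_c],
   where nonzero primes are maximal. *)
Lemma not_dim_ge2 I :
  (forall P, is_prime_ideal P -> (forall p, I p -> P p) ->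
     exists c, forall j, j != c -> P 'X_j) ->
  ~ dim_ge I 2.
Proof.
move=> Ivars [P [Pprime [IP Pchain]]].
have [c P0X] := Ivars _ (Pprime 0%N isT) IP.
have [P01 [p1 [P1p1 P0p1]]] := Pchain 0%N isT.
have [P12 [p2 [P2p2 P1p2]]] := Pchain 1%N isT.
have hP i : (i <= 2)%N -> prime_ideal (P i) by move/Pprime/is_prime_idealE.
have hP0 := hP 0%N isT; have hP1 := hP 1%N isT; have hP2 := hP 2%N isT.
have P1X j : j != c -> P 1%N 'X_j by move=> /P0X /P01.
have P2X j : j != c -> P 2%N 'X_j by move=> /P1X /P12.
have P0E := ideal_mem_uniE hP0 P0X; have P1E := ideal_mem_uniE hP1 P1X.
have P2E := ideal_mem_uniE hP2 P2X.
apply: (prime_ideal_proper hP2).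
rewrite -(rmorph1 (uni_mpoly c)).
apply: (poly_prime_ideal_maximal (g := mpoly_uni c p1) (s := mpoly_uni c p2)
  (prime_ideal_comap _ hP1) (ideal_comap _ hP2)).
- by move=> q; apply: P12.
- by rewrite -P1E.
- apply: contra_notN P0p1 => /eqP p10; rewrite P0E p10 rmorph0; exact: ideal0 hP0.
- by rewrite -P2E.
- by rewrite -P1E.
Qed.

End KrullDimension.

Section Depth.
Variables (K : fieldType) (n : nat).
Local Notation A := {mpoly K[n]}.
Implicit Types (I : A -> Prop) (f : nat -> A) (p g : A).

Lemma ideal_plus_ideal I f k : ideal I -> ideal (ideal_plus I f k).
Proof.
move=> hI; split=> [|a b [qa [ca [Iqa ->]]] [qb [cb [Iqb ->]]]|a b [q [c [Iq ->]]]].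
- exists 0, (fun=> 0); split; first exact: ideal0.
  by rewrite big1 ?addr0 // => i; rewrite mul0r.
- exists (qa + qb), (fun i => ca i + cb i); split; first exact: idealD.
  by rewrite addrACA -big_split; congr (_ + _); apply: eq_bigr => i _; rewrite mulrDl.
- exists (a * q), (fun i => a * c i); split; first exact: idealMl.
  by rewrite mulrDr mulr_sumr; congr (_ + _); apply: eq_bigr => i _; rewrite mulrA.
Qed.

Lemma ideal_plus0 I f p : ideal_plus I f 0 p <-> I p.
Proof.
split=> [[q [c [Iq ->]]]|Ip]; first by rewrite big_ord0 addr0.
by exists p, (fun=> 0); rewrite big_ord0 addr0.
Qed.

Lemma ideal_plus1 I f p :
  ideal_plus I f 1 p <-> exists q c, I q /\ p = q + c * f 0%N.
Proof.
split=> [[q [c [Iq ->]]]|[q [c [Iq ->]]]]; first by exists q, (c 0%N); rewrite big_ord1.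
by exists q, (fun=> c); rewrite big_ord1.
Qed.

Lemma depth_ge1 I g : g@_0 = 0 -> (forall h, I (h * g) -> I h) ->
  ~ (exists q c, I q /\ 1 = q + c * g) -> depth_ge I 1.
Proof.
move=> g0 greg g_proper; exists (fun=> g); split=> [[]//|]; split.
  by move=> [|//] _ h /ideal_plus0 /greg /ideal_plus0.
by move=> /ideal_plus1.
Qed.

Lemma depth_ge_regular I k : depth_ge I k.+1 ->
  exists g, g@_0 = 0 /\ forall h, I (h * g) -> I h.
Proof.
move=> [f [f0 [freg _]]]; exists (f 0%N); split=> [|h /ideal_plus0 /freg]; first exact: f0.
by move=> /(_ isT) /ideal_plus0.
Qed.

Lemma depth_ge2_regular I : depth_ge I 2 ->
  exists f, [/\ (f 0%N)@_0 = 0, (f 1%N)@_0 = 0, forall h, I (h * f 0%N) -> I h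
              & forall h, ideal_plus I f 1 (h * f 1%N) -> ideal_plus I f 1 h].
Proof.
move=> [f [f0 [freg _]]]; exists f; split; [exact: f0 | exact: f0 | |exact: freg].
by move=> h /ideal_plus0 /(freg 0%N isT) /ideal_plus0.
Qed.

End Depth.

(** * The ideal (x_s x_m^P, x_s x_t^R, x_m x_t^Q) of K[x_0, x_1, x_2] *)

Lemma ord3_cases (a b c j : 'I_3) :
  a != b -> a != c -> b != c -> j != c -> j = a \/ j = b.
Proof.
move=> ab ac bc jc; case: (eqVneq j a) => [|ja]; [by left | right; apply/val_inj/eqP].
move: ab ac bc jc ja (ltn_ord a) (ltn_ord b) (ltn_ord c) (ltn_ord j).
by rewrite -!val_eqE /=; lia.
Qed.

Section C3Ideal.
Variables (K : fieldType) (s m t : 'I_3) (P Q R : nat).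
Local Notation A := {mpoly K[3]}.

Definition C3_ideal : A -> Prop :=
  gen_ideal [:: 'X_s * 'X_m ^+ P; 'X_s * 'X_t ^+ R; 'X_m * 'X_t ^+ Q].
Local Notation J := C3_ideal.
Local Notation Jcolon := (gen_ideal [:: 'X_m ^+ P; 'X_t ^+ R] : A -> Prop).

Lemma C3_ideal_min (I : A -> Prop) : ideal I ->
  I ('X_s * 'X_m ^+ P) -> I ('X_s * 'X_t ^+ R) -> I ('X_m * 'X_t ^+ Q) ->
  forall p, J p -> I p.
Proof.
move=> hI I1 I2 I3; apply: gen_ideal_min => // g.
by rewrite !inE => /or3P [] /eqP ->.
Qed.

Hypotheses (sm : s != m) (st : s != t) (mt : m != t) (RQ : (R <= Q)%N).

Let ms : (m == s) = false. Proof. by rewrite eq_sym (negbTE sm). Qed.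
Let ts : (t == s) = false. Proof. by rewrite eq_sym (negbTE st). Qed.
Let J_ideal : ideal J := gen_ideal_ideal _.
Let XtQ : 'X_t ^+ Q = 'X_t ^+ (Q - R) * 'X_t ^+ R :> A.
Proof. by rewrite -exprD subnK. Qed.

Lemma C3_ideal_XmXt a : J (a * ('X_m * 'X_t ^+ Q)).
Proof. by apply/gen_ideal3P; exists 0, 0, a; rewrite !mul0r !add0r. Qed.

Lemma C3_ideal_XsXt a : J (a * ('X_s * 'X_t ^+ Q)).
Proof. by apply/gen_ideal3P; exists 0, (a * 'X_t ^+ (Q - R)), 0; rewrite XtQ; ring. Qed.

Lemma C3_ideal_uni p : J p -> mpoly_uni t p = 0.
Proof.
move: p; apply: (C3_ideal_min (I := fun p => mpoly_uni t p = 0)).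
  exact: (prime_ideal_kernel (mpoly_uni t)).
all: by rewrite rmorphM rmorphXn !mpoly_uniX ?(negbTE st) ?(negbTE mt) mul0r.
Qed.

Lemma C3_ideal_irrelevant p : J p -> p@_0 = 0.
Proof. by move=> /C3_ideal_uni uni0; rewrite -(mpoly_uni_horner0 t) uni0 horner0. Qed.

Lemma C3_ideal_msubst0 p : J p -> exists r, msubst0 s p = r * ('X_m * 'X_t ^+ Q).
Proof.
move=> Jp; apply/gen_ideal1P; move: p Jp.
apply: (C3_ideal_min (I := fun p => gen_ideal _ (msubst0 s p))).
- exact: (ideal_comap (msubst0 s) (gen_ideal_ideal _)).
- by rewrite rmorphM msubst0X eqxx mul0r; apply: ideal0 (gen_ideal_ideal _).
- by rewrite rmorphM msubst0X eqxx mul0r; apply: ideal0 (gen_ideal_ideal _).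
rewrite rmorphM rmorphXn !msubst0X ms ts.
by apply: gen_ideal_mem; rewrite mem_seq1.
Qed.

Lemma C3_ideal_colonXsE h : J ('X_s * h) <-> Jcolon h.
Proof.
split=> [/gen_ideal3P [c1 [c2 [c3 hE]]]|]; last first.
  move: h; apply: (gen_ideal_min (I := fun h => J ('X_s * h))).
    exact: ideal_colon J_ideal.
  by move=> g; rewrite !inE => /orP [] /eqP ->; apply: gen_ideal_mem; rewrite !inE eqxx ?orbT.
have /msubst0_eq0 [c3' c3E] : msubst0 s c3 = 0.
  have /eqP := congr1 (msubst0 s) hE.
  rewrite !rmorphD !rmorphM !rmorphXn !msubst0X eqxx ms ts !mul0r !mulr0 !add0r eq_sym.
  by rewrite !mulf_eq0 expf_eq0 !(negbTE (mpolyX_neq0 _)) andbF !orbF => /eqP.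
apply/gen_ideal2P; exists c1, (c2 + c3' * 'X_m * 'X_t ^+ (Q - R)).
by apply: (mulfI (mpolyX_neq0 s)); rewrite hE c3E XtQ; ring.
Qed.

Lemma C3_colon_regularXs h : Jcolon ('X_s * h) -> Jcolon h.
Proof.
move=> /gen_ideal2P [a [b hE]]; have [a1 aE] := msubst0_split s a.
have [b1 bE] := msubst0_split s b.
have ab0 : msubst0 s a * 'X_m ^+ P + msubst0 s b * 'X_t ^+ R = 0.
  have := congr1 (msubst0 s) hE; rewrite !rmorphD !rmorphM !rmorphXn !msubst0X eqxx.
  by rewrite ms ts mul0r.
apply/gen_ideal2P; exists a1, b1; apply: (mulfI (mpolyX_neq0 s)).
rewrite hE {1}aE {1}bE.
transitivity (msubst0 s a * 'X_m ^+ P + msubst0 s b * 'X_t ^+ R +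
  'X_s * (a1 * 'X_m ^+ P + b1 * 'X_t ^+ R)); first ring.
by rewrite ab0 add0r.
Qed.

Let shift (e : A) := msubst (fun j => if j == s then 'X_s + e else 'X_j).

Let shiftX e j : j != s -> shift e 'X_j = 'X_j.
Proof. by rewrite msubstX => /negbTE ->. Qed.

Let shift_Xs e : shift e 'X_s = 'X_s + e.
Proof. by rewrite msubstX eqxx. Qed.

Let colon_shift e p : Jcolon p -> Jcolon (shift e p).
Proof.
move: p; apply: gen_ideal_min; first exact: (ideal_comap _ (gen_ideal_ideal _)).
move=> g g_in; apply: gen_ideal_mem; move: g_in.
by rewrite !inE => /orP [] /eqP ->; rewrite rmorphXn shiftX 1?eq_sym ?inE ?eqxx ?orbT.
Qed.

(* The shift [x_s |-> x_s - x_m - x_t] fixes [Jcolon] and turns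
   [x_s + x_m + x_t] into [x_s]. *)
Lemma C3_colon_regular h : Jcolon (h * ('X_s + 'X_m + 'X_t)) -> Jcolon h.
Proof.
rewrite -addrA; set e := 'X_m + 'X_t => /(colon_shift (- e)).
have shift_e e' : shift e' e = e by rewrite rmorphD !shiftX ?ms ?ts.
rewrite rmorphM rmorphD shift_Xs shift_e addrNK mulrC => /C3_colon_regularXs.
move=> /(colon_shift e); congr Jcolon; apply: msubstK => j.
case: (eqVneq j s) => [->|js]; last by rewrite !shiftX.
by rewrite rmorphB shift_Xs shift_e addrK.
Qed.

(* Setting [x_s = 0] shows that the part of [g] free of [x_s] is a multiple of
   [x_m x_t^Q]; the rest is a multiple of [x_s], handled by [J : x_s]. *)
Lemma C3_ideal_regular g : J (g * ('X_s + 'X_m + 'X_t)) -> J g.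
Proof.
move=> Jgf; have [g1 gE] := msubst0_split s g; set g0 := msubst0 s g in gE.
have Jg0 : J g0.
  have [r] := C3_ideal_msubst0 Jgf.
  rewrite rmorphM !rmorphD !msubst0X eqxx ms ts add0r -/g0 => g0E.
  have [a g0E'] : exists a, g0 = 'X_m ^+ 1 * a.
    apply: (mpolyXn_dvd (i := t) (b := 'X_t ^+ Q * r)); first by rewrite eq_sym.
    by rewrite mulrC addrC g0E; ring.
  have [a' aE] : exists a', a = 'X_t ^+ Q * a'.
    apply: (mpolyXn_dvd mt (b := r)); apply: (mulfI (mpolyX_neq0 m)).
    by rewrite mulrCA -[_ * a]expr1 -g0E' mulrC g0E; ring.
  by rewrite g0E' aE expr1 mulrA mulrC; apply: C3_ideal_XmXt.
rewrite gE; apply: (idealD J_ideal Jg0).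
apply/C3_ideal_colonXsE/C3_colon_regular/C3_ideal_colonXsE.
have -> : 'X_s * (g1 * ('X_s + 'X_m + 'X_t)) =
  g * ('X_s + 'X_m + 'X_t) - g0 * ('X_s + 'X_m + 'X_t) by rewrite gE; ring.
by apply: (idealB J_ideal Jgf); apply: idealMr.
Qed.

Lemma C3_depth_ge1 : depth_ge J 1.
Proof.
have f0 : ('X_s + 'X_m + 'X_t : A)@_0 = 0 by rewrite !mcoeffD !mcoeff0X !addr0.
apply: (depth_ge1 f0 C3_ideal_regular) => -[q [c [Jq q1]]].
have irr : ideal (fun p : A => p@_0 = 0) := irrelevant_prime.
have /eqP : (1 : A)@_0 = 0.
  by rewrite q1; apply: (idealD irr); [apply: C3_ideal_irrelevant | apply: (idealMl irr)].
by rewrite mcoeff1 eqxx oner_eq0.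
Qed.

Lemma C3_ideal_mulXt p : mpoly_uni t p = 0 -> J ('X_t ^+ Q * p).
Proof.
move=> p0; have Xin j : j != t -> J ('X_t ^+ Q * 'X_j).
  by move=> /(ord3_cases sm st mt) [] ->; rewrite mulrC -[_ * _]mul1r;
    [apply: C3_ideal_XsXt | apply: C3_ideal_XmXt].
have : J ('X_t ^+ Q * (p - uni_mpoly t (mpoly_uni t p))) :=
  uni_sub_mem (ideal_colon _ J_ideal) Xin p.
by rewrite p0 rmorph0 subr0.
Qed.

Lemma C3_regular_uni_neq0 g : (forall h, J (h * g) -> J h) -> mpoly_uni t g != 0.
Proof.
move=> greg; apply/eqP => /C3_ideal_mulXt /greg /C3_ideal_uni /eqP.
by rewrite rmorphXn mpoly_uniX eqxx expf_eq0 polyX_eq0 andbF.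
Qed.

Lemma C3_ideal_colonXm c : J ('X_m * c) -> exists z, mpoly_uni t c = z * 'X ^+ Q.
Proof.
move=> /C3_ideal_msubst0 [r]; rewrite rmorphM msubst0X ms mulrCA.
move=> /(mulfI (mpolyX_neq0 m)) cE; exists (mpoly_uni t r).
by rewrite -(mpoly_uni_msubst0 c st) cE rmorphM rmorphXn mpoly_uniX eqxx.
Qed.

(* Write [mpoly_uni t f0 = G * x] for [f0] in the irrelevant ideal. The element
   [y = x_t^Q G(x_t)] is annihilated by the irrelevant ideal modulo [J + (f0)]
   but does not lie in [J + (f0)] unless [G = 0]. *)
Lemma C3_socle f0 G j : mpoly_uni t f0 = G * 'X ->
  exists q c, J q /\ 'X_j * ('X_t ^+ Q * uni_mpoly t G) = q + c * f0.
Proof.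
move=> FE; have [->|jt] := eqVneq j t.
  exists ('X_t ^+ Q * (uni_mpoly t (mpoly_uni t f0) - f0)), ('X_t ^+ Q).
  split; first by apply: C3_ideal_mulXt; rewrite rmorphB uni_mpolyK subrr.
  by rewrite FE rmorphM uni_mpolyX; ring.
exists ('X_j * ('X_t ^+ Q * uni_mpoly t G)), 0; split; last by rewrite mul0r addr0.
rewrite mulrCA; apply: C3_ideal_mulXt.
by rewrite rmorphM mpoly_uniX (negbTE jt) mul0r.
Qed.

Lemma C3_socle_notin f0 G q c : (forall h, J (h * f0) -> J h) ->
  mpoly_uni t f0 = G * 'X -> J q ->
  'X_t ^+ Q * uni_mpoly t G = q + c * f0 -> G = 0.
Proof.
move=> f0_reg FE Jq yE; have [z zE] : exists z, mpoly_uni t c = z * 'X ^+ Q.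
  apply/C3_ideal_colonXm/f0_reg.
  have -> : 'X_m * c * f0 = 'X_m * ('X_t ^+ Q * uni_mpoly t G) - 'X_m * q.
    by rewrite yE; ring.
  apply: (idealB J_ideal); last exact: idealMl.
  by rewrite mulrA mulrC; apply: C3_ideal_XmXt.
have /eqP : 'X ^+ Q * G * (1 - z * 'X) = 0.
  have := congr1 (mpoly_uni t) yE.
  rewrite rmorphD (C3_ideal_uni Jq) add0r !rmorphM zE FE rmorphXn mpoly_uniX eqxx.
  by rewrite uni_mpolyK => yuni; rewrite mulrBr mulr1 {1}yuni; ring.
rewrite !mulf_eq0 expf_eq0 polyX_eq0 andbF /= => /orP [/eqP //|].
move=> /eqP /(congr1 (horner^~ 0)) /eqP; rewrite !hornerE /= subr0.
by rewrite oner_eq0.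
Qed.

Lemma C3_not_depth_ge2 : ~ depth_ge J 2.
Proof.
move=> /depth_ge2_regular [f [f0_irr f1_irr f0_reg f1_reg]].
have [G FE] : exists G, mpoly_uni t (f 0%N) = G * 'X.
  have /factor_theorem [G ->] : root (mpoly_uni t (f 0%N)) 0.
    by rewrite /root mpoly_uni_horner0 f0_irr.
  by exists G; rewrite subr0.
have /f1_reg /ideal_plus1 [q [c [Jq yE]]] :
    ideal_plus J f 1 ('X_t ^+ Q * uni_mpoly t G * f 1%N).
  apply: (irrelevant_min (I := fun p => ideal_plus J f 1 (_ * p))) f1_irr.
    exact: ideal_colon (ideal_plus_ideal f 1 J_ideal).
  by move=> i; rewrite mulrC; apply/ideal_plus1/C3_socle.
move: (C3_regular_uni_neq0 f0_reg).
by rewrite FE (C3_socle_notin f0_reg FE Jq yE) mul0r eqxx.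
Qed.

Lemma C3_prime_vars (Pr : A -> Prop) : is_prime_ideal Pr -> (forall p, J p -> Pr p) ->
  exists c, forall j, j != c -> Pr 'X_j.
Proof.
move=> /is_prime_idealE hP JP.
have edge a b k : J ('X_a * 'X_b ^+ k) -> Pr 'X_a \/ Pr 'X_b.
  by move=> /JP /(prime_idealM hP) [|/(prime_ideal_pow hP)]; [left | right].
have two a b c : a != b -> a != c -> b != c -> Pr 'X_a -> Pr 'X_b ->
    exists c', forall j, j != c' -> Pr 'X_j.
  by move=> ab ac bc Pa Pb; exists c => j /(ord3_cases ab ac bc) [] ->.
have [J1 J2 J3] : [/\ J ('X_s * 'X_m ^+ P), J ('X_s * 'X_t ^+ R) & J ('X_m * 'X_t ^+ Q)].
  by split; apply: gen_ideal_mem; rewrite !inE eqxx ?orbT.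
have [Ps|Pm] := edge _ _ _ J1.
  have [Pm|Pt] := edge _ _ _ J3; first exact: two _ _ _ sm st mt Ps Pm.
  by apply: (two _ _ _ st sm _ Ps Pt); rewrite eq_sym.
have [Ps|Pt] := edge _ _ _ J2; first exact: two _ _ _ sm st mt Ps Pm.
exact: two _ _ _ mt (negbT ms) (negbT ts) Pm Pt.
Qed.

Lemma C3_cohen_macaulay : cohen_macaulay J.
Proof.
exists 1%N; split; first exact: C3_depth_ge1.
split; first exact: C3_not_depth_ge2.
split; first exact: (dim_ge1 (c := t) C3_ideal_uni).
exact: not_dim_ge2 C3_prime_vars.
Qed.

End C3Ideal.

(** * Edge ideals of weighted oriented triangles *)

Section EdgeIdeal.
Variables (K : fieldType) (E : rel 'I_3) (w : 'I_3 -> nat).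
Local Notation A := {mpoly K[3]}.
Local Notation I := (@edge_ideal K E w).

Lemma edge_ideal_ideal : ideal I.
Proof.
split=> [|a b [ca ->] [cb ->]|a b [c ->]].
- by exists (fun _ _ => 0); rewrite big1 // => i _; rewrite big1 // => j _; rewrite mul0r.
- exists (fun i j => ca i j + cb i j); rewrite -big_split /=; apply: eq_bigr => i _.
  by rewrite -big_split /=; apply: eq_bigr => j _; rewrite mulrDl.
- exists (fun i j => a * c i j); rewrite mulr_sumr; apply: eq_bigr => i _.
  by rewrite mulr_sumr; apply: eq_bigr => j _; apply: mulrA.
Qed.

Lemma edge_ideal_gen i j : E i j -> I ('X_i * 'X_j ^+ w j).
Proof.
move=> Eij; exists (fun a b => ((a == i) && (b == j))%:R).
rewrite (bigD1 i) //= [X in _ + X]big1 ?addr0 => [|a /negbTE ai]; last first.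
  by rewrite big1 // => b _; rewrite ai mul0r.
rewrite (bigD1 j) //= !eqxx mul1r big1 ?addr0 // => b /andP [_ /negbTE ->].
by rewrite mul0r.
Qed.

Lemma edge_ideal_min (I' : A -> Prop) : ideal I' ->
  (forall i j, E i j -> I' ('X_i * 'X_j ^+ w j)) -> forall p, I p -> I' p.
Proof.
move=> hI' I'gen p [c ->]; apply: ideal_sum => // i _.
by apply: ideal_sum => // j Eij; apply: idealMl => //; apply: I'gen.
Qed.

Lemma edge_ideal_uni c : (forall i, ~~ E i i) -> (forall k, (0 < w k)%N) ->
  forall p, I p -> mpoly_uni c p = 0.
Proof.
move=> Eirr wpos; apply: edge_ideal_min; first exact: (prime_ideal_kernel (mpoly_uni c)).
move=> i j Eij; rewrite rmorphM rmorphXn !mpoly_uniX.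
case: eqP => [ic|_]; last by rewrite mul0r.
have /negbTE -> : j != c by apply: contraTneq Eij => ->; rewrite -ic Eirr.
by rewrite expr0n gtn_eqF ?wpos // mulr0.
Qed.

Lemma edge_ideal_mpolyX i j (mm : 'X_{1..3}) :
  E i j -> (U_(i) + U_(j) *+ w j <= mm)%MM -> I 'X_[mm].
Proof.
move=> Eij /submK <-; rewrite mpolyXD mpolyXD -mpolyXn.
by apply: (idealMl edge_ideal_ideal); apply: edge_ideal_gen.
Qed.

(* The polynomials all of whose multiples have no [x^mu] term form an ideal. *)
Lemma edge_ideal_mcoeff (mu : 'X_{1..3}) :
  (forall i j, E i j -> ~~ (U_(i) + U_(j) *+ w j <= mu)%MM) -> forall p, I p -> p@_mu = 0.
Proof.
move=> notle p /(edge_ideal_min (I' := fun p => forall a, (a * p)@_mu = 0)) Ip.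
rewrite -[p]mul1r Ip // => [|i j Eij a].
  split=> [a|a b Ia Ib c|a b Ib c]; first by rewrite mulr0 mcoeff0.
    by rewrite mulrDr mcoeffD Ia Ib addr0.
  by rewrite mulrA Ib.
by rewrite mpolyXn -mpolyXD mcoeff_mulX_eq0 ?notle.
Qed.

Lemma edge_ideal_no_regular : (forall k, (1 < w k)%N) ->
  (forall i, exists2 p, p != i & E p i) ->
  forall g : A, g@_0 = 0 -> ~ (forall h, I (h * g) -> I h).
Proof.
move=> w2 in_nbr g g0 greg; pose mu : 'X_{1..3} := [multinom (w k).-1 | k < 3].
have notle i j : E i j -> ~~ (U_(i) + U_(j) *+ w j <= mu)%MM.
  move=> _; apply/mnm_lepP => /(_ j); rewrite mnmDE mulmnE !mnm1E mnmE eqxx mul1n.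
  by have := w2 j; case: (i == j) => /=; lia.
have Imu : I ('X_[mu] * g).
  apply: (irrelevant_min (I := fun p => I ('X_[mu] * p))) g0.
    exact: ideal_colon edge_ideal_ideal.
  move=> i; have [p pi Epi] := in_nbr i; rewrite -mpolyXD.
  apply: (edge_ideal_mpolyX Epi); apply/mnm_lepP => k; rewrite !mnmDE mulmnE !mnm1E mnmE.
  have := w2 k; have := w2 i; case: (eqVneq i k) => [<-|_].
    by rewrite (negbTE pi) /=; lia.
  by case: (p == k) => /=; lia.
have /eqP := edge_ideal_mcoeff notle (greg _ Imu).
by rewrite mcoeffX eqxx oner_eq0.
Qed.

End EdgeIdeal.

Section Orientation.
Variable E : rel 'I_3.
Hypothesis orient : orientation_C3 E.

Let Eirr i : E i i = false. Proof. by apply/negbTE; case: orient. Qed.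

Let Eanti i j : E i j -> E j i = false.
Proof.
case: orient => _ Eor Eij; rewrite Eor ?Eij //.
by apply: contraTneq Eij => ->; rewrite Eirr.
Qed.

Lemma edge_neq i j : E i j -> i != j.
Proof. by apply: contraTneq => ->; rewrite Eirr. Qed.

Lemma in_neighbour i : ~ is_source E i -> exists2 p, p != i & E p i.
Proof.
move=> nsrc; case: (boolP [forall j, (j != i) ==> E i j]) => [/forallP src|].
  by case: nsrc => j /(implyP (src j)).
rewrite negb_forall => /existsP [j]; rewrite negb_imply => /andP [ji nEij].
by exists j => //; case: orient => _ ->.
Qed.

(* Either [s -> m -> t] with [s] a source, or [s -> m -> t -> s] is the
   cyclic orientation and [s] is the prescribed vertex [x]. *)
Lemma orientation_C3_path x :
  exists s m t, [/\ s != t, E s m, E m t & (E t s -> s = x)].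
Proof.
have [a [b [xa xb Eab]]] : exists a b, [/\ x != a, x != b & E a b].
  have x0 := neq_lift x ord0; have x1 := neq_lift x ord_max.
  case Eab: (E (lift x ord0) (lift x ord_max)).
    by exists (lift x ord0), (lift x ord_max).
  exists (lift x ord_max), (lift x ord0); split=> //.
  by case: orient => _ ->; rewrite ?Eab // (inj_eq (@lift_inj _ x)).
have ab := edge_neq Eab.
case Exa: (E x a); first by exists x, a, b.
have Eax : E a x by case: orient => _ ->; rewrite ?Exa // eq_sym.
case Exb: (E x b); first by exists a, x, b; rewrite (Eanti Eab).
have Ebx : E b x by case: orient => _ ->; rewrite ?Exb // eq_sym.
by exists a, b, x; rewrite Exa eq_sym.
Qed.

Lemma edge_ideal_C3 (K : fieldType) (w : 'I_3 -> nat) s m t :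
  s != t -> E s m -> E m t -> (E t s -> w s = 1%N) ->
  @edge_ideal K E w = @C3_ideal K s m t (w m) (w t) (if E s t then w t else 1%N).
Proof.
move=> st Esm Emt wts; have sm := edge_neq Esm; have mt := edge_neq Emt.
have cover k : [\/ k = s, k = m | k = t].
  by case: (eqVneq k t) => [->|/(ord3_cases sm st mt) [] ->]; constructor.
apply: functional_extensionality => p; apply: propositional_extensionality; split.
  move: p; apply: edge_ideal_min; first exact: gen_ideal_ideal.
  move=> i j; case: (cover i) => ->; case: (cover j) => -> Eij;
    rewrite ?Eirr ?(Eanti Esm) ?(Eanti Emt) // in Eij.
  - by apply: gen_ideal_mem; rewrite !inE eqxx.
  - by apply: gen_ideal_mem; rewrite Eij !inE eqxx orbT.
  - by apply: gen_ideal_mem; rewrite !inE eqxx !orbT.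
  rewrite (wts Eij) expr1 mulrC; apply: gen_ideal_mem.
  by rewrite (Eanti Eij) expr1 !inE eqxx orbT.
move: p; apply: C3_ideal_min; first exact: edge_ideal_ideal.
- exact: edge_ideal_gen.
- case: ifP => [Est|Est]; first exact: edge_ideal_gen.
  have Ets : E t s by case: orient => _ ->; rewrite ?Est // eq_sym.
  have -> : 'X_s * 'X_t ^+ 1 = 'X_t * 'X_s ^+ w s :> {mpoly K[3]}.
    by rewrite (wts Ets) !expr1 mulrC.
  exact: edge_ideal_gen.
- exact: edge_ideal_gen.
Qed.

End Orientation.

Lemma edge_ideal_not_cohen_macaulay (K : fieldType) (E : rel 'I_3) (w : 'I_3 -> nat) :
  orientation_C3 E -> weight_ok E w -> (forall i, w i != 1%N) ->
  ~ cohen_macaulay (@edge_ideal K E w).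
Proof.
move=> orient [wpos wsrc] w_ne1 [k [dep [_ [_ ndim]]]].
have w2 i : (1 < w i)%N by have := wpos i; have := w_ne1 i; case: (w i) => [|[]].
have in_nbr i : exists2 p, p != i & E p i.
  by apply: (in_neighbour orient) => /wsrc /eqP; apply/negP/w_ne1.
case: k dep ndim => [|k] dep ndim.
  by apply: ndim; apply: (dim_ge1 (c := ord0)); apply: edge_ideal_uni => //; case: orient.
have [g [g0 greg]] := depth_ge_regular dep.
exact: (edge_ideal_no_regular w2 in_nbr g0 greg).
Qed.

Lemma edge_ideal_cohen_macaulay (K : fieldType) (E : rel 'I_3) (w : 'I_3 -> nat) x :
  orientation_C3 E -> (forall i, (0 < w i)%N) -> w x = 1%N ->
  cohen_macaulay (@edge_ideal K E w).
Proof.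
move=> orient wpos wx; have [s [m [t [st Esm Emt tsx]]]] := orientation_C3_path orient x.
rewrite (edge_ideal_C3 orient K (w := w) st Esm Emt) => [|/tsx ->//].
apply: C3_cohen_macaulay (edge_neq orient Esm) st (edge_neq orient Emt) _.
by case: ifP.
Qed.

Theorem theorem4p3 (K : fieldType) (E : rel 'I_3) (w : 'I_3 -> nat) :
  orientation_C3 E -> weight_ok E w ->
  (cohen_macaulay (@edge_ideal K E w) <-> exists x : 'I_3, w x = 1%N).
Proof.
move=> orient wok; split=> [CM|[x]]; last exact: edge_ideal_cohen_macaulay orient wok.1.
case: (boolP [exists x, w x == 1%N]) => [/existsP [x /eqP]|]; first by exists x.
rewrite negb_exists => /forallP w_ne1.
by case: (edge_ideal_not_cohen_macaulay orient wok w_ne1 CM).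
Qed.
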